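(* Let $\pi$ be a (not necessarily unique) QSD of $(X_t)_{0\le t<\tau_\partial}$, $\lambda=\lambda(\pi)$, and assume condition (DAD) holds with set $A$, function $\psi$, constants $c_0',c_1>0$ and times $t_0,t_1>0$. Define $t_3:=t_0+t_1$ and $$c_3:=\frac{\lambda^{t_0}c_0'c_1}{\Lambda(A)\|\psi\|_\infty\|1/\psi\|_\infty\|\frac{d\pi}{d\Lambda}\|_{L^\infty(\Lambda)}}.$$ Then $\dfrac{P_{t_3}(x,\cdot)}{P_{t_3}1(x)}\ge c_3\pi(\cdot)$ for every $x\in\chi$.
   Context: $\chi$ is a metric space with Borel $\sigma$-algebra and a distinguished $\sigma$-finite Borel measure $\Lambda$ of full support. $(X_t)_{0\le t<\tau_\partial}$ is a killed Markov process on $\chi$ (discrete or continuous time), absorption time $\tau_\partial$, submarkovian semigroup $P_t(x,A)=\mathbb P_x(X_t\in A,\tau_\partial>t)$; $K1(x)=K(x,\chi)$. A QSD is $\pi\in\mathcal P(\chi)$ with $\mathbb P_\pi(X_t\in\cdot\mid\tau_\partial>t)=\pi$ for all $t$; $\lambda(\pi)=\mathbb P_\pi(\tau_\partial>1)$. $\mathcal P_\infty(\Lambda)$ = probability measures $\ll\Lambda$ with density in $L^\infty(\Lambda)$. $\mathcal B_{b,\gg}(\chi)$ = bounded Borel functions with positive infimum. (AD): there exist $\psi\in\mathcal B_{b,\gg}(\chi)$, $t_0>0$, $a>0$ and a submarkovian kernel $\tilde P$ with $\psi(x)\Lambda(dx)P_{t_0}(x,dy)=a\psi(y)\Lambda(dy)\tilde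 P(y,dx)$ on $\chi\times\chi$, $\tilde P1(y)>0$ for $\Lambda$-a.e. $y$, and $c_0'>0$, $\nu\in\mathcal P(\chi)$ not mutually singular with $\pi$ with $\tilde P(y,\cdot)/\tilde P1(y)\ge c_0'\nu$ for $\Lambda$-a.e. $y$. (DAD) Combined Dobrushin and adjoint Dobrushin condition: $\pi\in\mathcal P_\infty(\Lambda)$; there are a Borel set $A$ with $\Lambda(A)<\infty$, $\nu_1\in\mathcal P(\chi)$ with $\nu_1(\chi\setminus A)=0$, $c_1>0$, $t_1>0$ with $P_{t_1}1(x)>0$ for all $x$ and $P_{t_1}(x,\cdot)/P_{t_1}1(x)\ge c_1\nu_1$ for all $x\in\chi$ (this forces $\pi(A)>0$, hence $\Lambda(A)>0$); and (AD) holds with $\nu:=\Lambda|_A/\Lambda(A)$, some $c_0'>0$ and $t_0>0$. *)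

From HB Require Import structures.
From mathcomp Require Import all_boot all_order all_algebra.
From mathcomp Require Import all_classical all_reals all_analysis.
From mathcomp Require Import ess_sup_inf.

Set Implicit Arguments.
Unset Strict Implicit.
Unset Printing Implicit Defensive.

Import Order.TTheory GRing.Theory Num.Def Num.Theory.
Import numFieldNormedType.Exports.

Local Open Scope classical_set_scope.
Local Open Scope ring_scope.

(* MathComp-Analysis measurable types must be pointed, so a point x0 of M is
   used to equip (an alias of) M with a pointed structure; x0 plays no other
   role (chi is nonempty anyway since it carries a probability measure). *)
Definition pt_metric (R : realType) (M : metricType R) (x0 : M) : Type := M.
HB.instance Definition _ (R : realType) (M : metricType R) (x0 : M) :=
  Choice.on (@pt_metric _ M x0).
HB.instance Definition _ (R : realType) (M : metricType R) (x0 : M) :=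
  isPointed.Build (@pt_metric _ M x0) x0.
Definition borel_space (R : realType) (M : metricType R) (x0 : M) :=
  @g_sigma_algebraType (@pt_metric _ M x0) (@open M).

Definition is_time (R : realType) (disc : bool) (t : R) : Prop :=
  if disc then exists n : nat, t = n%:R else 0 <= t.

Definition killed_semigroup d (R : realType) (T : measurableType d)
    (disc : bool) (P : R -> R.-spker T ~> T) : Prop :=
  (forall x (A : set T), measurable A -> P 0 x A = \d_x A) /\
  (forall s t, is_time disc s -> is_time disc t ->
     forall x (A : set T), measurable A ->
       P (s + t) x A = (\int[P s x]_y P t y A)%E).

(* Quasi-stationary distribution: for every time t, P_pi(tau > t) > 0 and
   P_pi(X_t in . | tau > t) = pi. *)
Definition is_QSD d (R : realType) (T : measurableType d) (disc : bool)
    (P : R -> R.-spker T ~> T) (pi : probability T R) : Prop :=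
  forall t, is_time disc t ->
    (0 < \int[pi]_x P t x setT)%E /\
    forall A : set T, measurable A ->
      (\int[pi]_x P t x A = (\int[pi]_x P t x setT) * pi A)%E.

Definition lambda_QSD d (R : realType) (T : measurableType d)
    (P : R -> R.-spker T ~> T) (pi : probability T R) : R :=
  fine (\int[pi]_x P 1%R x setT)%E.

Definition mutually_singular d (R : realType) (T : measurableType d)
    (m1 m2 : set T -> \bar R) : Prop :=
  exists S : set T, measurable S /\ m1 S = 0%E /\ m2 (~` S) = 0%E.

Definition normalized_restriction d (R : realType) (T : measurableType d)
    (Lam : set T -> \bar R) (A : set T) : set T -> \bar R :=
  fun B => (fine (Lam (B `&` A)) / fine (Lam A))%:E.

Definition sup_norm (R : realType) (T : Type) (f : T -> R) : R :=
  sup [set `|f x| | x in [set: T]].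

From HB Require Import structures.
From mathcomp Require Import all_boot all_order all_algebra.
From mathcomp Require Import all_classical all_reals all_analysis.
From mathcomp Require Import ess_sup_inf measurable_realfun.
From mathcomp Require Import ring lra.

Import Order.TTheory GRing.Theory Num.Def Num.Theory.
Import numFieldNormedType.Exports.

Local Open Scope classical_set_scope.
Local Open Scope ring_scope.

Set Implicit Arguments.
Unset Strict Implicit.
Unset Printing Implicit Defensive.

(* Write g(y) = P_t0(y, B), p = pi(B) and f0 = P_pi(tau > t0).
   1. Survival function.  For a QSD pi, s(t) = P_pi(tau > t) is
      multiplicative on the time set (Markov property and quasi-
      stationarity, through an integral identity for the mixture of a kernel
      by pi); comparing s(t0)^n with s at an integer time close to n t0
      gives s(t0) >= lambda^t0.
   2. Adjoint transfer.  The duality (AD) and the minorization of Ptilde by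
      the normalized restriction of Lambda to A give, for H inside A,
        (c0' Lambda(H) / Lambda(A)) int psi g dLambda <= int_H psi g dLambda,
      whereas quasi-stationarity and dpi/dLambda <= N give
        f0 p <= N |1/psi|_oo int psi g dLambda.
      Hence the part of A where g <= theta K0 (theta < 1, K0 the constant
      dictated by these bounds) is Lambda-null, thus pi-null, thus nu1-null
      by the Dobrushin condition integrated against pi.
   3. Chapman-Kolmogorov at t0 + t1 and the Dobrushin condition at t1 then
      give P_t3(x, B) / P_t3 1(x) >= theta K0 c1; letting theta -> 1 and
      using step 1 yields the constant c3. *)

Lemma ge_mul_lt1 (R : realFieldType) (c r : R) : 0 <= r ->
  (forall theta, 0 < theta < 1 -> theta * c <= r) -> c <= r.
Proof.
move=> r0 H; rewrite leNgt; apply/negP => rc.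
have c0 : 0 < c by exact: le_lt_trans rc.
have rc1 : r / c < 1 by rewrite ltr_pdivrMr// mul1r.
have rc0 : 0 <= r / c by rewrite divr_ge0// ltW.
have mid : 0 < (1 + r / c) / 2 < 1 by apply/andP; split; lra.
have midE : (1 + r / c) / 2 * c = (c + r) / 2.
  by rewrite mulrAC mulrDl mul1r divfK ?gt_eqF.
by have := H _ mid; rewrite midE; lra.
Qed.

Lemma strict_contraction (R : realFieldType) (u r y theta : R) :
  0 < u -> 0 < y -> y <= r -> 0 <= theta -> theta < 1 ->
  u * r <= theta * u * y -> False.
Proof.
move=> u_gt0 y_gt0 y_le th0 th1 ur_le.
have ur_gt0 : 0 < u * r by apply: mulr_gt0 => //; exact: lt_le_trans y_gt0 y_le.
have gap : 0 <= theta * u * (r - y) by rewrite mulr_ge0 ?subr_ge0// mulr_ge0// ltW.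
have slack : 0 < (1 - theta) * (u * r) by rewrite mulr_gt0 ?subr_gt0.
nra.
Qed.

Lemma mulr4_gt0 (R : numDomainType) (x y z w : R) :
  0 <= x -> 0 <= y -> 0 <= z -> 0 <= w -> 0 < x * y * z * w ->
  [/\ 0 < x, 0 < y, 0 < z & 0 < w].
Proof.
move=> x0 y0 z0 w0 /lt0r_neq0; rewrite !mulf_eq0 !negb_or => /andP[/andP[/andP[]]].
by rewrite !lt0r x0 y0 z0 w0 => -> -> -> ->.
Qed.

(* If c q^n <= f^n for every n (with c, q > 0), then q <= f: otherwise
   (f / q)^n would tend to 0 while staying above c. *)
Lemma geometric_domination (R : realType) (c q f : R) : 0 < c -> 0 < q -> 0 <= f ->
  (forall n, c * q ^+ n <= f ^+ n) -> q <= f.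
Proof.
move=> c0 q0 f0 H; rewrite leNgt; apply/negP => fq.
have z1 : `|f / q| < 1.
  by rewrite ger0_norm ?divr_ge0 ?(ltW q0)// ltr_pdivrMr// mul1r.
have [N _ HN] := cvgr_lt _ (cvg_expr z1) _ c0.
have := H N; rewrite -ler_pdivlMr ?exprn_gt0// -expr_div_n.
by rewrite leNgt (HN N (leqnn N)).
Qed.

Section time_set.
Context (R : realType) (disc : bool).

Lemma time_nat (n : nat) : is_time disc (n%:R : R).
Proof. by case: disc => /=; [exists n|]. Qed.

Lemma time1 : is_time disc (1 : R).
Proof. exact: (time_nat 1). Qed.

Lemma time_Mn (t : R) (n : nat) : is_time disc t -> is_time disc (n%:R * t).
Proof.
by case: disc => /= [[m ->]|]; [exists (n * m)%N; rewrite natrM|exact: mulr_ge0].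
Qed.

Lemma time_round_up (t : R) (n : nat) : is_time disc t ->
  exists m : nat, [/\ n%:R * t <= m%:R, m%:R <= n%:R * t + 1 &
                      is_time disc (m%:R - n%:R * t)].
Proof.
case: disc => /= [[k ->]|t0].
  by exists (n * k)%N; rewrite natrM subrr lerDl ler01; split => //; exists 0%N.
have nt0 : 0 <= n%:R * t by rewrite mulr_ge0.
exists (Num.truncn (n%:R * t)).+1; split.
- exact/ltW/truncnS_gt.
- by rewrite -addn1 natrD lerD2r truncn_le.
- by rewrite subr_ge0; exact/ltW/truncnS_gt.
Qed.

End time_set.

Lemma spker_fineK d (T : measurableType d) (R : realType) (k : R.-spker T ~> T)
    x (S : set T) : measurable S -> (fine (k x S))%:E = k x S.
Proof.
move=> mS; rewrite fineK// ge0_fin_numE//.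
apply: (@le_lt_trans _ _ 1%E); last by rewrite ltry.
by apply: le_trans (sprob_kernel_le1 k x); apply: le_measure; rewrite ?inE.
Qed.

Lemma probability_fineK d (T : measurableType d) (R : realType)
    (p : probability T R) (S : set T) : measurable S -> (fine (p S))%:E = p S.
Proof. by move=> mS; rewrite fineK// fin_num_measure. Qed.

Lemma mixture_fin_num d (T : measurableType d) (R : realType)
    (pi : probability T R) (k : R.-spker T ~> T) (S : set T) :
  measurable S -> (\int[pi]_x k x S)%E \is a fin_num.
Proof.
move=> mS; rewrite ge0_fin_numE ?integral_ge0//.
apply: (@le_lt_trans _ _ (\int[pi]_x (cst 1 x))%E); last first.
  by rewrite integral_cst//= mul1e probability_setT ltry.
apply: ge0_le_integral => //; first exact: measurable_kernel.
by move=> y _; apply: le_trans (sprob_kernel_le1 k y); apply: le_measure; rewrite ?inE.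
Qed.

(* This is the composition formula
   integral_kcomp for the constant kernel pi followed by the kernel
   (x, y) |-> k y (the library's kernel_snd). *)
Lemma integral_mixture d (T : measurableType d) (R : realType)
    (pi : probability T R) (k : R.-spker T ~> T) (mu : {measure set T -> \bar R}) :
  (forall A, measurable A -> \int[pi]_y k y A = mu A)%E ->
  forall f : T -> \bar R, (forall z, 0 <= f z)%E -> measurable_fun setT f ->
  (\int[pi]_y \int[k y]_z f z = \int[mu]_z f z)%E.
Proof.
move=> kmu f f0 mf.
pose l := kprobability (@measurable_cst _ _ T _ setT (pi : pprobability T R)).
pose k' := @kernel.kernel_snd _ _ _ T T T R k.
rewrite -[LHS](integral_kcomp l k' point)//.
by apply: eq_measure_integral => A mA _; exact: kmu.
Qed.

Definition survival d (T : measurableType d) (R : realType)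
    (P : R -> R.-spker T ~> T) (pi : probability T R) (t : R) : R :=
  fine (\int[pi]_x P t x setT)%E.

Section QSD_survival.
Context d (T : measurableType d) (R : realType) (disc : bool)
  (P : R -> R.-spker T ~> T) (pi : probability T R).
Hypotheses (hP : killed_semigroup disc P) (hQ : is_QSD disc P pi).
Local Notation surv := (survival P pi).

Lemma survivalE t : (\int[pi]_x P t x setT)%E = (surv t)%:E.
Proof. by rewrite fineK// mixture_fin_num. Qed.

Lemma survival_ge0 t : 0 <= surv t.
Proof. by rewrite -lee_fin -survivalE integral_ge0. Qed.

Lemma survival_le1 t : surv t <= 1.
Proof.
rewrite -lee_fin -survivalE; apply: (@le_trans _ _ (\int[pi]_x (cst 1 x))%E).
  by apply: ge0_le_integral => //; [exact: measurable_kernel|move=> y _; exact: sprob_kernel_le1].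
by rewrite integral_cst//= mul1e probability_setT.
Qed.

Lemma survival_gt0 t : is_time disc t -> 0 < surv t.
Proof. by move=> ht; rewrite -lte_fin -survivalE; case: (hQ ht). Qed.

Lemma QSD_integral t (A : set T) : is_time disc t -> measurable A ->
  (\int[pi]_x P t x A = (surv t)%:E * pi A)%E.
Proof. by move=> ht mA; rewrite -survivalE; case: (hQ ht) => _ ->. Qed.

Lemma survival0 : surv 0 = 1.
Proof.
apply/EFin_inj; rewrite -survivalE.
under eq_integral do rewrite hP.1// diracT.
by rewrite integral_cst//= mul1e probability_setT.
Qed.

Lemma survivalD s t : is_time disc s -> is_time disc t ->
  surv (s + t) = surv s * surv t.
Proof.
move=> hs ht; apply/EFin_inj; rewrite -survivalE EFinM.
under eq_integral do rewrite hP.2//.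
have mix := integral_mixture (mu := mscale (NngNum (survival_ge0 s)) pi)
  (fun A mA => QSD_integral hs mA) (fun z => measure_ge0 (P t z) setT)
  (measurable_kernel (P t) _ measurableT).
rewrite mix ge0_integral_mscale//=; last exact: measurable_kernel.
exact: (f_equal (fun z => (surv s)%:E * z)%E (survivalE t)).
Qed.

Lemma survival_natM t n : is_time disc t -> surv (n%:R * t) = surv t ^+ n.
Proof.
move=> ht; elim: n => [|n IH]; first by rewrite mul0r survival0 expr0.
by rewrite -addn1 natrD mulrDl mul1r survivalD ?IH ?exprD ?expr1 //; exact: time_Mn.
Qed.

(* surv t >= lambda^t: compare surv t ^ n with surv at an integer time
   m in [n t, n t + 1] and let n grow. *)
Lemma survival_powR_le t : is_time disc t -> powR (surv 1) t <= surv t.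
Proof.
move=> ht.
have lam0 : 0 < surv 1 := survival_gt0 (time1 _ _).
have lam_nat m : surv m%:R = surv 1 ^+ m.
  by rewrite -[m%:R]mulr1 survival_natM //; exact: time1.
apply: (geometric_domination lam0 (powR_gt0 _ lam0) (survival_ge0 t)) => n.
have [m [m1 m2 mt]] := time_round_up n ht.
have surv_m : surv m%:R <= surv t ^+ n.
  have -> : m%:R = n%:R * t + (m%:R - n%:R * t) by rewrite addrC subrK.
  rewrite survivalD //; last exact: time_Mn.
  rewrite (survival_natM n ht).
  by apply: ler_piMr; [exact/exprn_ge0/survival_ge0|exact: survival_le1].
apply: le_trans surv_m; rewrite lam_nat -(powR_mulrn m (ltW lam0)).
have -> : surv 1 * surv 1 `^ t ^+ n = surv 1 `^ (n%:R * t + 1).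
  rewrite powRD; last by rewrite (gt_eqF lam0) implybT.
  rewrite (powRr1 (ltW lam0)) mulrC [n%:R * t]mulrC powRrM.
  by rewrite (powR_mulrn _ (powR_ge0 _ _)).
by apply: ger_powR m2; rewrite lam0 survival_le1.
Qed.

End QSD_survival.

Lemma indic_setX (U V : Type) (R : realType) (A : set U) (B : set V) u v :
  \1_(A `*` B) (u, v) = \1_A u * \1_B v :> R.
Proof.
by rewrite !indicE in_setX /=; case: (u \in A); case: (v \in B); rewrite ?mul1r ?mul0r.
Qed.

Lemma integral_indic_rectangle d (T : measurableType d) (R : realType)
    (mu : {measure set T -> \bar R}) (U V : set T) u : measurable V ->
  (\int[mu]_v (\1_(U `*` V) (u, v))%:E = (\1_U u)%:E * mu V)%E.
Proof.
move=> mV; under eq_integral do rewrite indic_setX EFinM.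
rewrite ge0_integralZl//; first by rewrite integral_indic// setIT.
exact/measurable_EFinP/measurable_indic.
Qed.

Lemma integral_indic_rectangle_swap d (T : measurableType d) (R : realType)
    (mu : {measure set T -> \bar R}) (U V : set T) v : measurable U ->
  (\int[mu]_u (\1_(U `*` V) (u, v))%:E = (\1_V v)%:E * mu U)%E.
Proof.
move=> mU; under eq_integral do rewrite indic_setX mulrC EFinM.
rewrite ge0_integralZl//; first by rewrite integral_indic// setIT.
exact/measurable_EFinP/measurable_indic.
Qed.

Section adjoint_transfer.
Context d (T : measurableType d) (R : realType).
Variables (Lam : {measure set T -> \bar R}) (K Kt : R.-spker T ~> T)
  (psi : T -> R) (a c : R) (A : set T).
Hypotheses (mpsi : measurable_fun setT psi) (psi_ge0 : forall x, 0 <= psi x).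
Hypotheses (a_ge0 : 0 <= a) (c_ge0 : 0 <= c).
Hypothesis adjoint : forall E : set (T * T), measurable E ->
  (\int[Lam]_x ((psi x)%:E * \int[K x]_y (\1_E (x, y))%:E)
   = a%:E * \int[Lam]_y ((psi y)%:E * \int[Kt y]_x (\1_E (x, y))%:E))%E.
Hypothesis minor : \forall y \ae Lam, forall B, measurable B ->
  c * fine (normalized_restriction Lam A B) <= fine (Kt y B) / fine (Kt y setT).

Lemma adjoint_rectangle U V : measurable U -> measurable V ->
  (\int[Lam]_x ((psi x)%:E * ((\1_U x)%:E * K x V))
   = a%:E * \int[Lam]_y ((psi y)%:E * ((\1_V y)%:E * Kt y U)))%E.
Proof.
move=> mU mV.
transitivity (\int[Lam]_x ((psi x)%:E * \int[K x]_y (\1_(U `*` V) (x, y))%:E))%E.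
  by apply: eq_integral => x _; rewrite integral_indic_rectangle.
rewrite adjoint; last exact: measurableX.
by congr (_ * _)%E; apply: eq_integral => y _; rewrite integral_indic_rectangle_swap.
Qed.

Lemma minorization_subset H : measurable H -> H `<=` A ->
  \forall y \ae Lam, ((c * fine (Lam H) / fine (Lam A))%:E * Kt y setT <= Kt y H)%E.
Proof.
move=> mH HA; apply: filterS minor => y /(_ H mH).
rewrite /normalized_restriction setIidl//= -(spker_fineK _ _ mH).
rewrite -(spker_fineK _ _ measurableT) -EFinM lee_fin.
have [->|u_neq0] := eqVneq (fine (Kt y setT)) 0; first by rewrite mulr0 fine_ge0.
have u_gt0 : 0 < fine (Kt y setT) by rewrite lt_neqAle eq_sym u_neq0 fine_ge0.
by rewrite ler_pdivlMr// /= mulrA.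
Qed.

Lemma adjoint_transfer B H : measurable B -> measurable H -> H `<=` A ->
  ((c * fine (Lam H) / fine (Lam A))%:E * \int[Lam]_x ((psi x)%:E * K x B)
   <= \int[Lam]_x ((psi x)%:E * ((\1_H x)%:E * K x B)))%E.
Proof.
move=> mB mH HA; set q := c * fine (Lam H) / fine (Lam A).
have q_ge0 : 0 <= q by rewrite divr_ge0 ?mulr_ge0 ?fine_ge0.
have mKt U : measurable U -> measurable_fun setT
    (fun y => (psi y)%:E * ((\1_B y)%:E * Kt y U))%E.
  move=> mU; apply: emeasurable_funM; first exact/measurable_EFinP.
  apply: emeasurable_funM; last exact: measurable_kernel.
  exact/measurable_EFinP/measurable_indic.
have psi_ge0E (y : T) : (0 <= (psi y)%:E)%E by rewrite lee_fin.
have -> : (\int[Lam]_x ((psi x)%:E * K x B)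
    = \int[Lam]_x ((psi x)%:E * ((\1_setT x)%:E * K x B)))%E.
  by apply: eq_integral => x _; rewrite indicT mul1e.
rewrite !adjoint_rectangle// muleCA lee_wpmul2l ?lee_fin//.
rewrite -ge0_integralZl//; last 2 first.
- exact: mKt.
- by move=> y _; rewrite !mule_ge0 ?lee_fin.
apply: ae_ge0_le_integral => //.
- by move=> y _; rewrite !mule_ge0 ?lee_fin.
- exact/measurable_funeM/mKt.
- by move=> y _; rewrite !mule_ge0 ?lee_fin.
- exact: mKt.
apply: filterS (minorization_subset mH HA) => y hy _.
by rewrite muleCA lee_wpmul2l ?lee_fin// muleCA lee_wpmul2l.
Qed.


End adjoint_transfer.

(* Minorization estimates under (DAD), with explicit bounds S >= psi,
   Si >= 1/psi and pi <= N Lam in place of the norms of the theorem. *)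
Section DAD_estimates.
Context d (T : measurableType d) (R : realType) (disc : bool).
Variables (Lam : {measure set T -> \bar R}) (P : R -> R.-spker T ~> T)
  (pi : probability T R) (Pt : R.-spker T ~> T) (psi : T -> R) (A : set T)
  (nu1 : probability T R) (t0 t1 a c0 c1 S Si N : R).
Hypotheses (hP : killed_semigroup disc P) (hQ : is_QSD disc P pi).
Hypotheses (t0time : is_time disc t0) (t1time : is_time disc t1).
Hypotheses (N_ge0 : 0 <= N)
  (pi_le : forall B, measurable B -> (pi B <= N%:E * Lam B)%E).
Hypotheses (mA : measurable A) (LamA_fin : (Lam A < +oo)%E).
Hypotheses (nu1A : nu1 (~` A) = 0%E) (c1_gt0 : 0 < c1)
  (Pt1_gt0 : forall x, (0 < P t1 x setT)%E)
  (dobrushin : forall x B, measurable B ->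
     c1 * fine (nu1 B) <= fine (P t1 x B) / fine (P t1 x setT)).
Hypotheses (mpsi : measurable_fun setT psi) (psi_gt0 : forall x, 0 < psi x)
  (psi_le : forall x, psi x <= S) (Si_psi : forall x, 1 <= Si * psi x).
Hypotheses (a_gt0 : 0 < a) (c0_gt0 : 0 < c0).
Hypothesis adjoint : forall E : set (T * T), measurable E ->
  (\int[Lam]_x ((psi x)%:E * \int[P t0 x]_y (\1_E (x, y))%:E)
   = a%:E * \int[Lam]_y ((psi y)%:E * \int[Pt y]_x (\1_E (x, y))%:E))%E.
Hypothesis minor : \forall y \ae Lam, forall B, measurable B ->
  c0 * fine (normalized_restriction Lam A B) <= fine (Pt y B) / fine (Pt y setT).

Local Notation surv := (survival P pi).
Local Notation D := (fine (Lam A) * S * Si * N).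

Let psiE_ge0 y : (0 <= (psi y)%:E)%E.
Proof. by rewrite lee_fin ltW. Qed.

Let mpsiE : measurable_fun setT (fun y => (psi y)%:E).
Proof. exact/measurable_EFinP. Qed.

Let S_ge0 : 0 <= S.
Proof. exact: le_trans (ltW (psi_gt0 point)) (psi_le point). Qed.

Let Si_ge0 : 0 <= Si.
Proof.
rewrite leNgt; apply/negP => Si_lt0; have := Si_psi point.
by rewrite leNgt (lt_trans _ ltr01)// pmulr_llt0.
Qed.

Definition low_set (B : set T) (K : R) : set T :=
  A `&` [set y | (P t0 y B <= K%:E)%E].

Lemma measurable_low_set B K : measurable B -> measurable (low_set B K).
Proof.
by move=> mB; apply: measurable_lee => //; exact: measurable_funTS (measurable_kernel _ _ mB).
Qed.

(* A pi-null set is nu1-null: integrate the Dobrushin bound against the QSD. *)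
Lemma dobrushin_null H : measurable H -> pi H = 0%E -> nu1 H = 0%E.
Proof.
move=> mH piH; rewrite -probability_fineK//; congr (_%:E).
have Pt1E y : ((c1 * fine (nu1 H))%:E * P t1 y setT <= P t1 y H)%E.
  rewrite -(spker_fineK _ _ mH) -(spker_fineK _ _ measurableT) -EFinM lee_fin.
  have := Pt1_gt0 y; rewrite -(spker_fineK _ _ measurableT) lte_fin => u_gt0.
  by rewrite -ler_pdivlMr//; exact: dobrushin.
have : ((c1 * fine (nu1 H))%:E * (surv t1)%:E <= 0)%E.
  rewrite -(mule0 (surv t1)%:E) -piH -(QSD_integral hQ t1time mH) -survivalE.
  rewrite -ge0_integralZl//; last 2 first.
  - exact: measurable_kernel.
  - by rewrite lee_fin mulr_ge0 ?fine_ge0// ltW.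
  apply: ge0_le_integral => //.
  - by move=> y _; rewrite mule_ge0// lee_fin mulr_ge0 ?fine_ge0// ltW.
  - exact/measurable_funeM/measurable_kernel.
  - exact: measurable_kernel.
rewrite -EFinM lee_fin pmulr_lle0 ?(survival_gt0 hQ t1time)// pmulr_rle0//.
by move=> nu_le0; apply/eqP; rewrite eq_le nu_le0 fine_ge0.
Qed.

Lemma mass_lower B : measurable B ->
  ((surv t0 * fine (pi B))%:E
   <= (N * Si)%:E * \int[Lam]_y ((psi y)%:E * P t0 y B))%E.
Proof.
move=> mB; have mg := measurable_kernel (P t0) B mB.
rewrite EFinM probability_fineK// -(QSD_integral hQ t0time mB) EFinM -muleA.
apply: (@le_trans _ _ (N%:E * \int[Lam]_y P t0 y B))%E.
  rewrite -(ge0_integral_mscale Lam measurableT (NngNum N_ge0))//.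
  by apply: ge0_le_measure_integral => // U mU; exact: pi_le.
have mpg : measurable_fun setT (fun y => (psi y)%:E * P t0 y B)%E.
  exact: emeasurable_funM.
have pg_ge0 y : setT y -> (0 <= (psi y)%:E * P t0 y B)%E by rewrite mule_ge0.
rewrite lee_wpmul2l ?lee_fin// -ge0_integralZl ?lee_fin//.
apply: ge0_le_integral => //; first exact: measurable_funeM.
move=> y _; rewrite muleA -EFinM -{1}(mul1e (P t0 y B)).
by rewrite lee_wpmul2r// lee_fin.
Qed.

Lemma mass_upper B H Kb : measurable B -> measurable H -> 0 <= Kb ->
  (forall y, H y -> (P t0 y B <= Kb%:E)%E) ->
  (\int[Lam]_y ((psi y)%:E * ((\1_H y)%:E * P t0 y B))
   <= (S * Kb)%:E * Lam H)%E.
Proof.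
move=> mB mH Kb_ge0 HKb.
have mH1 : measurable_fun setT (fun y => (\1_H y)%:E : \bar R).
  exact/measurable_EFinP/measurable_indic.
have -> : Lam H = (\int[Lam]_y (\1_H y)%:E)%E by rewrite integral_indic// setIT.
rewrite -ge0_integralZl//; last by rewrite lee_fin mulr_ge0.
apply: ge0_le_integral => //.
- by move=> y _; rewrite mule_ge0 ?psiE_ge0// mule_ge0 ?lee_fin.
- by apply: emeasurable_funM => //; apply: emeasurable_funM => //; exact: measurable_kernel.
- exact: measurable_funeM.
move=> y _; rewrite indicE; have [/set_mem yH|_] := boolP (y \in H); last first.
  by rewrite !(mul0e, mule0).
rewrite mul1e mule1 -(spker_fineK _ _ mB) -EFinM lee_fin.
apply: ler_pM; [exact/ltW|exact: fine_ge0|exact: psi_le|].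
by rewrite -lee_fin spker_fineK//; exact: HKb.
Qed.

Lemma low_set_mass B K : measurable B -> 0 <= K ->
  ((c0 * fine (Lam (low_set B K)) / fine (Lam A))%:E
     * \int[Lam]_y ((psi y)%:E * P t0 y B)
   <= (S * K)%:E * Lam (low_set B K))%E.
Proof.
move=> mB K_ge0; have mH := measurable_low_set K mB.
apply: le_trans (adjoint_transfer mpsi (fun x => ltW (psi_gt0 x)) (ltW a_gt0)
  (ltW c0_gt0) adjoint minor mB mH (@subIsetl _ _ _)) _.
by apply: mass_upper mB mH K_ge0 _ => y [].
Qed.

(* Below the level theta * K0, the function P_t0(., B) can only live on a
   Lam-null part of A: otherwise the adjoint transfer would force the
   psi-weighted mass below its lower bound. *)
Lemma low_set_null B theta : measurable B -> 0 < theta < 1 ->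
  0 < fine (pi B) -> 0 < D ->
  Lam (low_set B (theta * (c0 * surv t0 * fine (pi B) / D))) = 0%E.
Proof.
move=> mB /andP[th0 th1] p_gt0 D_gt0.
set p := fine (pi B); set L := fine (Lam A).
set K := theta * _; set H := low_set B K.
have [L_gt0 S_gt0 Si_gt0 N_gt0] :=
  mulr4_gt0 (fine_ge0 (measure_ge0 _ _)) S_ge0 Si_ge0 N_ge0 D_gt0.
have f0_gt0 : 0 < surv t0 := survival_gt0 hQ t0time.
have K_ge0 : 0 <= K by rewrite mulr_ge0 ?divr_ge0 ?mulr_ge0 ?ltW.
have LamH_fin : (fine (Lam H))%:E = Lam H.
  rewrite fineK// ge0_fin_numE//; apply: le_lt_trans LamA_fin.
  by apply: le_measure; rewrite ?inE//; [exact: measurable_low_set|move=> y []].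
set h := fine (Lam H); rewrite -LamH_fin; congr (_%:E).
apply/eqP; rewrite eq_le (fine_ge0 (measure_ge0 _ _)) andbT leNgt.
apply/negP => h_gt0.
have u_gt0 : 0 < c0 * h / L by rewrite divr_gt0 ?mulr_gt0.
have low := mass_lower mB.
have up := low_set_mass mB K_ge0; rewrite -/H -/h -LamH_fin -EFinM in up.
have m_ge0 : (0 <= \int[Lam]_y ((psi y)%:E * P t0 y B))%E.
  by apply: integral_ge0 => y _; rewrite mule_ge0.
move: (\int[Lam]_y _)%E m_ge0 low up => [r| |]//; last first.
  by move=> _ _; rewrite mulry gtr0_sg// mul1e leNgt ltry.
rewrite -!EFinM !lee_fin => r_ge0 low up.
set y := surv t0 * p / (Si * N).
have y_gt0 : 0 < y by rewrite !divr_gt0 ?mulr_gt0.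
have y_le : y <= r.
  by rewrite ler_pdivrMr ?mulr_gt0// (_ : r * (Si * N) = N * Si * r) //; ring.
have SKh : S * K * h = theta * (c0 * h / L) * y.
  by rewrite /K /y; field; rewrite !gt_eqF.
move: up; rewrite SKh => up.
exact: (strict_contraction u_gt0 y_gt0 y_le (ltW th0) th1 up).
Qed.

(* Chapman-Kolmogorov at t0 + t1 combined with the Dobrushin condition:
   a lower bound Kb for P_t0(., B) on a nu1-full set G propagates to the
   normalized transition probability at time t0 + t1. *)
Lemma transition_ratio_lower x B G Kb : measurable B -> measurable G ->
  nu1 G = 1%E -> 0 <= Kb -> (forall y, G y -> (Kb%:E <= P t0 y B)%E) ->
  Kb * c1 <= fine (P (t0 + t1) x B) / fine (P (t0 + t1) x setT).
Proof.
move=> mB mG nuG Kb_ge0 GKb.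
have CK U : measurable U -> P (t0 + t1) x U = (\int[P t1 x]_y P t0 y U)%E.
  by move=> mU; rewrite addrC hP.2.
set u := fine (P t1 x setT).
have u_gt0 : 0 < u by rewrite -lte_fin spker_fineK.
have PG : c1 * u <= fine (P t1 x G).
  by have := dobrushin x mG; rewrite nuG /= mulr1 ler_pdivlMr.
have mG1 : measurable_fun setT (fun y => (\1_G y)%:E : \bar R).
  exact/measurable_EFinP/measurable_indic.
have lowB : Kb * (c1 * u) <= fine (P (t0 + t1) x B).
  rewrite -lee_fin spker_fineK// CK//.
  apply: (@le_trans _ _ (\int[P t1 x]_y (Kb%:E * (\1_G y)%:E))%E).
    rewrite ge0_integralZl ?lee_fin// integral_indic// setIT.
    by rewrite -(spker_fineK _ _ mG) EFinM lee_wpmul2l ?lee_fin.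
  apply: ge0_le_integral => //.
  - by move=> y _; rewrite mule_ge0 ?lee_fin.
  - exact: measurable_funeM.
  - exact: measurable_kernel.
  move=> y _; rewrite indicE; have [/set_mem Gy|_] := boolP (y \in G).
    by rewrite mule1; exact: GKb.
  by rewrite mule0.
have upT : fine (P (t0 + t1) x setT) <= u.
  rewrite -lee_fin !spker_fineK// CK//.
  apply: (@le_trans _ _ (\int[P t1 x]_y (cst 1%E y)))%E; last by rewrite integral_cst// mul1e.
  apply: ge0_le_integral => //; first exact: measurable_kernel.
  by move=> y _; exact: sprob_kernel_le1.
have BT : fine (P (t0 + t1) x B) <= fine (P (t0 + t1) x setT).
  by rewrite -lee_fin !spker_fineK//; apply: le_measure; rewrite ?inE.
have [v0|v_gt0] := eqVneq (fine (P (t0 + t1) x setT)) 0.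
  rewrite v0 invr0 mulr0; rewrite v0 in BT.
  have : Kb * c1 * u <= 0 by rewrite -mulrA (le_trans lowB).
  by rewrite pmulr_lle0.
rewrite ler_pdivlMr; last by rewrite lt_neqAle eq_sym v_gt0 fine_ge0.
apply: le_trans lowB; rewrite mulrA; apply: ler_wpM2l => //.
exact: mulr_ge0 Kb_ge0 (ltW c1_gt0).
Qed.

(* The normalized law at time t0 + t1 dominates a multiple of pi; theta < 1
   is the slack needed by low_set_null. *)
Lemma ratio_bound x B theta : measurable B -> 0 < theta < 1 -> 0 < D ->
  theta * (c0 * surv t0 * c1 / D) * fine (pi B)
  <= fine (P (t0 + t1) x B) / fine (P (t0 + t1) x setT).
Proof.
move=> mB th D_gt0; set p := fine (pi B).
have [p0|p_neq0] := eqVneq p 0.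
  by rewrite p0 mulr0 divr_ge0 ?fine_ge0.
have p_gt0 : 0 < p by rewrite lt_neqAle eq_sym p_neq0 fine_ge0.
set K := theta * (c0 * surv t0 * p / D).
have [th_gt0 _] := andP th.
have K_ge0 : 0 <= K.
  by rewrite mulr_ge0 ?divr_ge0 ?mulr_ge0 ?survival_ge0 ?(ltW th_gt0) ?(ltW D_gt0) ?(ltW p_gt0) ?(ltW c0_gt0).
set H := low_set B K.
have mH : measurable H := measurable_low_set K mB.
have LamH : Lam H = 0%E := low_set_null mB th p_gt0 D_gt0.
have piH : pi H = 0%E.
  by apply/le_anti; rewrite measure_ge0 andbT (le_trans (pi_le mH)) // LamH mule0.
have nuH := dobrushin_null mH piH.
set G := A `\` H.
have mG : measurable G by exact: measurableD.
have nuG : nu1 G = 1%E.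
  have nuCG : nu1 (~` G) = 0%E.
    apply/le_anti; rewrite measure_ge0 andbT setCD.
    apply: (le_trans (measureU2 _ _ _)); [exact: measurableC|by []|].
    by have := congr2 (fun u v => u + v)%E nu1A nuH; rewrite adde0 => ->.
  move: nuCG; rewrite probability_setC// -(probability_fineK _ mG) -EFinB => -[].
  by move/eqP; rewrite subr_eq0 eq_sym => /eqP ->.
have -> : theta * (c0 * surv t0 * c1 / D) * p = K * c1 by rewrite /K; ring.
apply: (transition_ratio_lower x mB mG nuG K_ge0) => y [Ay nHy].
by apply/ltW; rewrite ltNge; apply/negP => gK; exact: nHy.
Qed.

End DAD_estimates.

Lemma density_le d (T : measurableType d) (R : realType)
    (Lam : {measure set T -> \bar R}) (pi : set T -> \bar R) (f : T -> R) (N : R) :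
  measurable_fun setT f -> (forall x, 0 <= f x) -> 0 <= N ->
  (forall B, measurable B -> pi B = (\int[Lam]_(x in B) (f x)%:E)%E) ->
  (ess_sup Lam (fun x => (f x)%:E) <= N%:E)%E ->
  forall B, measurable B -> (pi B <= N%:E * Lam B)%E.
Proof.
move=> mf f_ge0 N_ge0 piE esN B mB; rewrite piE// -integral_cst//.
apply: ae_ge0_le_integral => //.
- by move=> x _; rewrite lee_fin.
- exact/measurable_EFinP/measurable_funTS.
- by apply: filterS (ess_sup_ge Lam (fun x => (f x)%:E)) => x fx _; exact: le_trans fx esN.
Qed.

Lemma sup_norm_ge (R : realType) (T : Type) (f : T -> R) (K : R) x :
  (forall y, `|f y| <= K) -> `|f x| <= sup_norm f.
Proof.
move=> fK; apply: ub_le_sup; last by exists x.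
by exists K => _ [y _ <-]; exact: fK.
Qed.

Lemma weight_sup_norms (T : Type) (R : realType) (psi : T -> R) (e : R) (x : T) :
  0 < e -> (forall y, e <= psi y) -> (exists K, forall y, `|psi y| <= K) ->
  [/\ 0 <= sup_norm psi, 0 <= sup_norm (fun y => (psi y)^-1),
      forall y, psi y <= sup_norm psi
    & forall y, 1 <= sup_norm (fun y => (psi y)^-1) * psi y].
Proof.
move=> e_gt0 e_psi [K psiK].
have psi_gt0 y : 0 < psi y := lt_le_trans e_gt0 (e_psi y).
have invK y : `|(psi y)^-1| <= e^-1.
  rewrite ger0_norm; last by rewrite invr_ge0 ltW.
  by rewrite lef_pV2 ?posrE.
split.
- exact: le_trans (normr_ge0 _) (sup_norm_ge x psiK).
- exact: le_trans (normr_ge0 _) (sup_norm_ge x invK).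
- by move=> y; exact: le_trans (ler_norm _) (sup_norm_ge y psiK).
- move=> y; rewrite -ler_pdivrMr// mul1r.
  by have := sup_norm_ge y invK; rewrite ger0_norm// invr_ge0 ltW.
Qed.

Theorem mainTheorem10 (R : realType) (M : metricType R) (x0 : M) (disc : bool)
  (Lam : {sigma_finite_measure set (borel_space x0) -> \bar R})
  (P : R -> R.-spker (borel_space x0) ~> (borel_space x0))
  (pi : probability (borel_space x0) R)
  (dpi : borel_space x0 -> R)
  (A : set (borel_space x0)) (nu1 : probability (borel_space x0) R)
  (c1 t1 : R)
  (psi : borel_space x0 -> R) (t0 a c0' : R)
  (Ptilde : R.-spker (borel_space x0) ~> (borel_space x0)) :
  (* Lambda has full support *)
  (forall U : set M, open U -> U !=set0 -> (0 < Lam U)%E) ->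
  (* (X_t) is a killed Markov process with semigroup P *)
  killed_semigroup disc P ->
  (* pi is a QSD *)
  is_QSD disc P pi ->
  (* (DAD): pi in P_infty(Lambda), with density dpi = dpi/dLambda *)
  measurable_fun setT dpi -> (forall x, 0 <= dpi x) ->
  (forall B, measurable B -> pi B = (\int[Lam]_(x in B) (dpi x)%:E)%E) ->
  (ess_sup Lam (fun x => (dpi x)%:E) < +oo)%E ->
  (* Dobrushin condition *)
  measurable A -> (Lam A < +oo)%E -> nu1 (~` A) = 0%E ->
  0 < c1 -> is_time disc t1 -> 0 < t1 ->
  (forall x, (0 < P t1 x setT)%E) ->
  (forall x B, measurable B ->
     c1 * fine (nu1 B) <= fine (P t1 x B) / fine (P t1 x setT)) ->
  (* (AD) with nu := Lambda|_A / Lambda(A) *)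
  measurable_fun setT psi ->
  (exists K, forall x, `|psi x| <= K) ->
  (exists e, 0 < e /\ forall x, e <= psi x) ->
  is_time disc t0 -> 0 < t0 -> 0 < a -> 0 < c0' ->
  (forall E : set (borel_space x0 * borel_space x0), measurable E ->
     (\int[Lam]_x ((psi x)%:E * \int[P t0 x]_y (\1_E (x, y))%:E)
      = a%:E * \int[Lam]_y ((psi y)%:E * \int[Ptilde y]_x (\1_E (x, y))%:E))%E) ->
  (\forall y \ae Lam, (0 < Ptilde y setT)%E) ->
  ~ mutually_singular (normalized_restriction Lam A) pi ->
  (\forall y \ae Lam, forall B, measurable B ->
     c0' * fine (normalized_restriction Lam A B)
       <= fine (Ptilde y B) / fine (Ptilde y setT)) ->
  (* conclusion *)
  let lam := lambda_QSD P pi in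
  let t3 := t0 + t1 in
  let c3 := powR lam t0 * c0' * c1 /
            (fine (Lam A) * sup_norm psi * sup_norm (fun x => (psi x)^-1)
             * fine (ess_sup Lam (fun x => (dpi x)%:E))) in
  forall x (B : set (borel_space x0)), measurable B ->
    c3 * fine (pi B) <= fine (P t3 x B) / fine (P t3 x setT).
Proof.
move=> _ hP hQ mdpi dpi_ge0 dpiE _ mA LamA_fin nu1A c1_gt0 t1time _ Pt1_gt0 dob
  mpsi psiK [e [e_gt0 e_psi]] t0time _ a_gt0 c0_gt0 adjoint _ _ minor
  lam t3 c3 x B mB.
set S := sup_norm psi; set Si := sup_norm (fun x => (psi x)^-1).
set N := fine (ess_sup Lam (fun x => (dpi x)%:E)).
set D := fine (Lam A) * S * Si * N.
have psi_gt0 y : 0 < psi y := lt_le_trans e_gt0 (e_psi y).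
have [S_ge0 Si_ge0 psi_le Si_psi] := weight_sup_norms x e_gt0 e_psi psiK.
have ratio_ge0 : 0 <= fine (P t3 x B) / fine (P t3 x setT).
  by rewrite divr_ge0 ?fine_ge0.
have [D_le0|D_gt0] := lerP D 0.
  apply: le_trans ratio_ge0; rewrite mulr_le0_ge0 ?fine_ge0//.
  by rewrite mulr_ge0_le0 ?invr_le0// !mulr_ge0 ?powR_ge0 ?ltW.
have N_gt0 : 0 < N.
  rewrite ltNge; apply/negP => N_le0; move: D_gt0; rewrite ltNge.
  by rewrite mulr_ge0_le0 ?mulr_ge0 ?fine_ge0.
have esN : (ess_sup Lam (fun x => (dpi x)%:E) <= N%:E)%E.
  by move: N_gt0; rewrite /N; case: ess_sup => //=; rewrite ltxx.
have pi_le := density_le mdpi dpi_ge0 (ltW N_gt0) dpiE esN.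
have lam_le : lam `^ t0 <= survival P pi t0 := survival_powR_le hP hQ t0time.
apply: ge_mul_lt1 ratio_ge0 _ => theta th.
apply: le_trans (ratio_bound hP hQ t0time t1time (ltW N_gt0) pi_le mA LamA_fin
  nu1A c1_gt0 Pt1_gt0 dob mpsi psi_gt0 psi_le Si_psi a_gt0 c0_gt0 adjoint minor
  x mB th D_gt0).
have [th_gt0 _] := andP th.
rewrite mulrA; apply: ler_wpM2r; first exact: fine_ge0 (measure_ge0 _ _).
apply: ler_wpM2l; first exact: ltW.
rewrite /c3 [c0' * _]mulrC; apply: ler_wpM2r; first by rewrite invr_ge0 ltW.
by apply: ler_wpM2r; [exact: ltW|apply: ler_wpM2r; [exact: ltW|]].
Qed.
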